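(* Let $\frac23\le M<\frac34$ and consider Algorithm D on an input whose optimal offline makespan is $1$. If job $j$ is handled by Step 4 and is assigned to $m_1$, then the set $W$ computed in Step 4 satisfies $|W|\le 1$ and $|W|<|Y_{j-1}|$.
   Context: Model (two hierarchical machines with migration, bin stretching). Jobs $1,2,\dots,n$ arrive one by one. Job $j$ has a size $p_j>0$ and a grade of service (GoS) $g_j\in\{1,2\}$; a job of GoS $1$ may only be processed on machine $m_1$, a job of GoS $2$ may be processed on $m_1$ or on $m_2$. When job $j$ arrives, the algorithm must assign it, and may migrate previously arrived jobs (respecting GoS) of total size at most $M\cdot p_j$. The optimal offline makespan of the complete input is known in advance and scaled to $1$. Notation: $Y_{j}$ is the set of jobs on $m_2$ just after job $j$ has been handled, $y_j$ its total size, $y_0=0$; ''sorted $Y_{j-1}$'' lists $Y_{j-1}$ in non-increasing order of size; $w_j$ is the total size of the (current) set $W$. Algorithm D (parameter $M$). On arrival of job $j$: Step 2: if $g_j=1$ or $y_{j-1}\ge M$, assign $j$ to $m_1$. Step 3: else if $y_{j-1}+p_j\le 2-M$, assign $j$ to $m_2$. Step 4: else if $p_j\ge M$: let $W$ be the longest prefix of sorted $Y_{j-1}$ with total size at most $M\cdot p_j$ (possibly empty). If $y_{j-1}-w_j+p_j>2-M$, assign $j$ to $m_1$; otherwise migrate the jobs of $W$ to $m_1$ and assign $j$ to $m_2$. Step 5: else (so $p_j<M$): let $W$ be the shortest prefix of sorted $Y_{j-1}$ with total size at least $M/3$ (or $Y_{j-1}$ if none exists). If $w_j>\min\{2M/3,\,M\cdot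 p_j\}$, replace $W$ by $Y_{j-1}\setminus W$. Then, if $y_{j-1}-w_j+p_j>2-M$, assign $j$ to $m_1$; otherwise migrate the jobs of $W$ to $m_1$ and assign $j$ to $m_2$. *)

From HB Require Import structures.
From mathcomp Require Import all_boot all_order all_algebra.
Set Implicit Arguments. Unset Strict Implicit. Unset Printing Implicit Defensive.
Import Order.TTheory GRing.Theory Num.Theory.
Local Open Scope ring_scope.

Section AlgD.
Variable R : realFieldType.
(* parameter M, job sizes p and grades of service g (jobs are numbered 1,2,...) *)
Variable M : R.
Variable p : nat -> R.
Variable g : nat -> nat.

Definition tsize (s : seq nat) : R := \sum_(i <- s) p i.

Definition sortY (Y : seq nat) : seq nat := sort (fun a b => p b <= p a) Y.

Definition longest_prefix (b : R) (s : seq nat) : seq nat :=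
  take (\max_(k < (size s).+1 | (tsize (take k s) <= b)%R) (k : nat))%N s.

(* shortest prefix of s with total size at least b, or s itself if none *)
Definition shortest_prefix (b : R) (s : seq nat) : seq nat :=
  take (find (fun k => b <= tsize (take k s)) (iota 0 (size s).+1)) s.

Definition W4 (Y : seq nat) (j : nat) : seq nat :=
  longest_prefix (M * p j) (sortY Y).

Definition W5 (Y : seq nat) (j : nat) : seq nat :=
  let s := sortY Y in
  let W := shortest_prefix (M / 3) s in
  if Num.min (2 * M / 3) (M * p j) < tsize W
  then [seq i <- s | i \notin W] else W.

Definition remove (Y W : seq nat) : seq nat := [seq i <- Y | i \notin W].

(* one step of Algorithm D: new content of m2 after handling job j *)
Definition stepD (Y : seq nat) (j : nat) : seq nat :=
  let y := tsize Y in
  if (g j == 1%N) || (M <= y) then Y                       (* Step 2 *)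
  else if y + p j <= 2 - M then j :: Y                     (* Step 3 *)
  else if M <= p j then                                    (* Step 4 *)
    let W := W4 Y j in
    if 2 - M < y - tsize W + p j then Y else j :: remove Y W
  else                                                     (* Step 5 *)
    let W := W5 Y j in
    if 2 - M < y - tsize W + p j then Y else j :: remove Y W.

(* Y_j : jobs on m2 just after job j has been handled; Y_0 is empty *)
Fixpoint Yset (j : nat) : seq nat :=
  match j with
  | 0 => [::]
  | j'.+1 => stepD (Yset j') j'.+1
  end.

Definition handled_step4 (j : nat) : Prop :=
  let y := tsize (Yset j.-1) in
  [/\ g j != 1%N, y < M, 2 - M < y + p j & M <= p j].

Definition step4_assigned_m1 (j : nat) : Prop :=
  let Y := Yset j.-1 in
  2 - M < tsize Y - tsize (W4 Y j) + p j.

End AlgD.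

(* Offline schedules: a : nat -> bool, a i = true means job i is on m2. *)
Definition valid_assignment (n : nat) (g : nat -> nat) (a : nat -> bool) : Prop :=
  forall i, (1 <= i <= n)%N -> g i = 1%N -> a i = false.

Definition load1 (R : realFieldType) (n : nat) (p : nat -> R) (a : nat -> bool) : R :=
  \sum_(1 <= i < n.+1 | ~~ a i) p i.
Definition load2 (R : realFieldType) (n : nat) (p : nat -> R) (a : nat -> bool) : R :=
  \sum_(1 <= i < n.+1 | a i) p i.

Definition opt_is_one (R : realFieldType) (n : nat) (p : nat -> R) (g : nat -> nat) : Prop :=
  (exists a, valid_assignment n g a /\ Num.max (load1 n p a) (load2 n p a) = 1) /\
  (forall a, valid_assignment n g a -> 1 <= Num.max (load1 n p a) (load2 n p a)).

(* If job j reaches Step 4 and is rejected from m2, then W is a proper prefix of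
   sorted Y_{j-1}: otherwise the load left on m2 would be p_j <= 1 < 2 - M.  A
   proper longest prefix W with at least two jobs weighs at least twice the first
   job x left out of it, and M p_j < w + x, so w > 2M p_j / 3.  The rejection
   condition then gives 2 - M < y - w + p_j < M + (1 - 2M/3) p_j <= 1 + M/3,
   i.e. M > 3/4. *)

From Pilot Require Import Defs.
From HB Require Import structures.
From mathcomp Require Import all_boot all_order all_algebra.
From mathcomp Require Import lra zify.

Set Implicit Arguments.
Unset Strict Implicit.
Unset Printing Implicit Defensive.
Import Order.TTheory GRing.Theory Num.Theory.
Local Open Scope ring_scope.

Lemma stepD_sub (R : realFieldType) (M : R) p g Y j :
  {subset stepD M p g Y j <= j :: Y}.
Proof.
have sub_cons (Z : seq nat) : {subset Z <= j :: Z}.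
  by move=> i iZ; rewrite inE iZ orbT.
have sub_remove (W : seq nat) : {subset j :: remove Y W <= j :: Y}.
  by move=> i; rewrite !inE mem_filter => /orP[-> // | /andP[_ ->]]; rewrite orbT.
by rewrite /stepD; repeat case: ifP => _.
Qed.

Lemma mem_Yset (R : realFieldType) (M : R) p g k i :
  i \in Yset M p g k -> (1 <= i <= k)%N.
Proof.
elim: k i => [|k IH] i //= /stepD_sub; rewrite inE => /orP[/eqP -> | /IH]; lia.
Qed.

Lemma le_sum_index_iota (R : realFieldType) (n : nat) (p : nat -> R)
    (P : pred nat) j :
  (forall i, (1 <= i <= n)%N -> 0 <= p i) -> (1 <= j <= n)%N -> P j ->
  p j <= \sum_(1 <= i < n.+1 | P i) p i.
Proof.
move=> p_ge0 hj Pj; rewrite -big_filter (bigD1_seq j) /=; first last.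
- by rewrite filter_uniq // iota_uniq.
- by rewrite mem_filter Pj mem_index_iota ltnS.
rewrite lerDl big_seq_cond sumr_ge0 // => i /andP[].
by rewrite mem_filter mem_index_iota ltnS => /andP[_ /p_ge0].
Qed.

Lemma opt_is_one_job_le1 (R : realFieldType) (n : nat) (p : nat -> R) g j :
  (forall i, (1 <= i <= n)%N -> 0 <= p i) -> opt_is_one n p g ->
  (1 <= j <= n)%N -> p j <= 1.
Proof.
move=> p_ge0 [[a [_ <-]] _] hj; rewrite le_max /load1 /load2.
by case aj: (a j); apply/orP; [right | left]; apply: le_sum_index_iota; rewrite ?aj.
Qed.

Lemma step4_load_lt (R : realFieldType) (M pj y w x : R) :
  M <= 3 / 4 -> pj <= 1 -> y < M -> M * pj < w + x -> 2 * x <= w ->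
  y - w + pj < 2 - M.
Proof.
move=> *.
have : 0 <= (1 - pj) * (1 - 2 * M / 3) by apply: mulr_ge0; lra.
nra.
Qed.

Section PrefixSizes.
Variables (R : realFieldType) (p : nat -> R).

Lemma tsize_rcons (s : seq nat) (i : nat) :
  Defs.tsize p (rcons s i) = Defs.tsize p s + p i.
Proof. by rewrite /Defs.tsize -cats1 big_cat big_seq1. Qed.

Lemma tsize_sortY (Y : seq nat) : Defs.tsize p (sortY p Y) = Defs.tsize p Y.
Proof. exact/perm_big/permEl/perm_sort. Qed.

Lemma size_sortY (Y : seq nat) : size (sortY p Y) = size Y.
Proof. exact: size_sort. Qed.

Lemma mem_sortY (Y : seq nat) : sortY p Y =i Y.
Proof. exact: mem_sort. Qed.

Lemma sorted_sortY (Y : seq nat) : sorted (fun a b => p b <= p a) (sortY p Y).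
Proof. by apply: sort_sorted => a b; apply: le_total. Qed.

Lemma sorted_tsize_take_ge (s : seq nat) (K : nat) :
  sorted (fun a b => p b <= p a) s -> (K < size s)%N ->
  K%:R * p (nth 0%N s K) <= Defs.tsize p (take K s).
Proof.
move=> s_sorted Ks.
have tr : transitive (fun a b => p b <= p a).
  by move=> b a c h1 h2; apply: le_trans h2 h1.
have le_nth k : (k < K)%N -> p (nth 0%N s K) <= p (nth 0%N s k).
  by move=> kK; apply: (sorted_ltn_nth tr 0%N s_sorted); rewrite ?inE //; lia.
suff: forall k, (k <= K)%N -> k%:R * p (nth 0%N s K) <= Defs.tsize p (take k s) by apply.
elim=> [|k IH] kK; first by rewrite mul0r /Defs.tsize take0 big_nil.
rewrite (take_nth 0%N (leq_trans kK (ltnW Ks))) tsize_rcons -addn1 natrD mulrDl mul1r.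
by apply: lerD; [apply: IH; lia | apply: le_nth].
Qed.

Lemma longest_prefixE (b : R) (s : seq nat) :
  longest_prefix p b s = take (size (longest_prefix p b s)) s.
Proof. by rewrite {2}/longest_prefix size_take_min take_min take_size. Qed.

Lemma longest_prefix_maximal (b : R) (s : seq nat) :
  let W := longest_prefix p b s in
  (size W < size s)%N -> b < Defs.tsize p W + p (nth 0%N s (size W)).
Proof.
rewrite /longest_prefix; set K := (\max_(k < _ | _) _)%N => /=.
rewrite size_take_min gtn_min ltnn orbF => Ks.
rewrite (minn_idPl (ltnW Ks)) -tsize_rcons -take_nth // ltNge; apply/negP => le_b.
have := @leq_bigmax_cond _ (fun k : 'I_(size s).+1 => Defs.tsize p (take k s) <= b)
  (fun k => k : nat) (Ordinal (Ks : (K.+1 < (size s).+1)%N)) le_b.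
by rewrite -/K /= ltnn.
Qed.

End PrefixSizes.

Theorem mainTheorem14 (R : realFieldType) (M : R) (n : nat)
    (p : nat -> R) (g : nat -> nat)
    (hM1 : 2 / 3 <= M) (hM2 : M < 3 / 4)
    (hp : forall i, (1 <= i <= n)%N -> 0 < p i)
    (hg : forall i, (1 <= i <= n)%N -> g i = 1%N \/ g i = 2%N)
    (hopt : opt_is_one n p g)
    (j : nat) (hj : (1 <= j <= n)%N)
    (h4 : handled_step4 M p g j)
    (hm1 : step4_assigned_m1 M p g j) :
  (size (W4 M p (Yset M p g j.-1) j) <= 1)%N /\
  (size (W4 M p (Yset M p g j.-1) j) < size (Yset M p g j.-1))%N.
Proof.
have p_ge0 i : (1 <= i <= n)%N -> 0 <= p i by move/hp/ltW.
have pj_le1 := opt_is_one_job_le1 p_ge0 hopt hj.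
move: h4 hm1; rewrite /handled_step4 /step4_assigned_m1 /W4.
set Y := Yset M p g j.-1; set s := sortY p Y; set W := longest_prefix p _ s.
move=> [_ y_lt_M _ _] rejected.
have W_take : W = take (size W) s := longest_prefixE p _ s.
have sizeW_lt : (size W < size Y)%N.
  rewrite ltnNge -(size_sortY p Y); apply/negP => /take_oversize sW.
  by move: rejected; rewrite W_take sW tsize_sortY; lra.
split=> //; rewrite leqNgt; apply/negP => two_le_W.
have x_ge0 : 0 <= p (nth 0%N s (size W)).
  have /mem_Yset x_range : nth 0%N s (size W) \in Y.
    by rewrite -(mem_sortY p) mem_nth ?size_sortY.
  by apply: p_ge0; lia.
have sizeW_lt_s : (size W < size s)%N by rewrite size_sortY.
have heavy : (size W)%:R * p (nth 0%N s (size W)) <= Defs.tsize p W.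
  by rewrite {3}W_take; apply: sorted_tsize_take_ge; rewrite ?sorted_sortY.
have twice_le : 2 * p (nth 0%N s (size W)) <= Defs.tsize p W.
  by apply: le_trans heavy; rewrite ler_wpM2r // (ler_nat _ 2).
have maximal := longest_prefix_maximal sizeW_lt_s.
have := step4_load_lt (ltW hM2) pj_le1 y_lt_M maximal twice_le; lra.
Qed.
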